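(* Let $D$ be a non-commutative division ring with center $F$. If $M$ is an irreducible locally solvable maximal subgroup of $D^*$, then its derived subgroup $M'$ is not contained in $F$.
   Context: $D^*$ is the multiplicative group of $D$; maximal subgroup = proper subgroup maximal among proper subgroups. A subgroup $G\le D^*$ is irreducible if the division subring $F(G)$ generated by $F\cup G$ equals $D$. Locally solvable: every finitely generated subgroup solvable. *)

(* Groups inside the (possibly infinite) multiplicative group
   D^* of a division ring D are represented as predicates D -> Prop. *)
From mathcomp Require Import all_boot all_order all_algebra.
Set Implicit Arguments. Unset Strict Implicit. Unset Printing Implicit Defensive.
Import GRing.Theory.
Local Open Scope ring_scope.

(* D is a division ring: every nonzero element is a unit (D is nontrivial,
   being an nzRing). *)
Definition division_ring (D : unitRingType) : Prop :=
  forall x : D, x != 0 -> x \is a GRing.unit.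

Definition center (D : unitRingType) (x : D) : Prop :=
  forall y : D, x * y = y * x.

Definition subgroup (D : unitRingType) (H : D -> Prop) : Prop :=
  [/\ forall x, H x -> x != 0,
      H 1,
      forall x y, H x -> H y -> H (x * y) &
      forall x, H x -> H x^-1].

Definition gen_subgroup (D : unitRingType) (A : D -> Prop) (x : D) : Prop :=
  forall H : D -> Prop, subgroup H -> (forall a, A a -> H a) -> H x.

Definition commr (D : unitRingType) (x y : D) : D := x^-1 * y^-1 * x * y.

Definition derived (D : unitRingType) (H : D -> Prop) : D -> Prop :=
  gen_subgroup (fun c => exists x y, [/\ H x, H y & c = commr x y]).

Fixpoint derived_series (D : unitRingType) (H : D -> Prop) (n : nat) : D -> Prop :=
  match n with
  | O => H
  | S m => derived (derived_series H m)
  end.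

Definition solvable_grp (D : unitRingType) (H : D -> Prop) : Prop :=
  exists n, forall x, derived_series H n x -> x = 1.

Definition locally_solvable (D : unitRingType) (G : D -> Prop) : Prop :=
  forall s : seq D, (forall a, a \in s -> G a) ->
    solvable_grp (gen_subgroup (fun a => a \in s)).

Definition maximal_subgroup (D : unitRingType) (M : D -> Prop) : Prop :=
  [/\ subgroup M,
      exists x : D, x != 0 /\ ~ M x &
      forall H : D -> Prop, subgroup H -> (forall x, M x -> H x) ->
        (exists x : D, x != 0 /\ ~ H x) -> forall x, H x -> M x].

Definition division_subring (D : unitRingType) (S : D -> Prop) : Prop :=
  [/\ S 0, S 1,
      forall x y, S x -> S y -> S (x - y),
      forall x y, S x -> S y -> S (x * y) &
      forall x, S x -> x != 0 -> S x^-1].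

Definition div_subring_gen (D : unitRingType) (G : D -> Prop) (x : D) : Prop :=
  forall S : D -> Prop, division_subring S ->
    (forall a, center a -> S a) -> (forall a, G a -> S a) -> S x.

Definition irreducible_grp (D : unitRingType) (G : D -> Prop) : Prop :=
  forall x : D, div_subring_gen G x.

From mathcomp Require Import all_boot all_order all_algebra.
Set Implicit Arguments. Unset Strict Implicit. Unset Printing Implicit Defensive.
Import GRing.Theory.
Local Open Scope ring_scope.

(* If M' lies in the center F, then for a in M the set of d with
   [a, d] in F is a subgroup of D^* containing M.  When a and b in M do not
   commute it misses 1 + b, so by maximality it equals M; as it contains 1 + a,
   so does M, and the centrality of [b, 1 + a] together with that of [a, b]
   forces a into F, a contradiction.  Hence M is abelian, and an irreducible
   abelian group makes D = F(M) commutative. *)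

Lemma addr_eq_sub (V : zmodType) (p q r s : V) : p + q = r + s -> q - s = r - p.
Proof. by move=> e; apply/eqP; rewrite subr_eq addrAC -e [p + q]addrC addrK. Qed.

Section DivisionRing.
Variable D : unitRingType.
Hypothesis hD : division_ring D.

Lemma unitdE (x : D) : (x \is a GRing.unit) = (x != 0).
Proof.
by apply/idP/idP => [ux|/hD //]; apply: contraTneq ux => ->; rewrite unitr0.
Qed.

Lemma division_subring_bigcap (I : Type) (S : I -> D -> Prop) :
  (forall i, division_subring (S i)) -> division_subring (fun x => forall i, S i x).
Proof.
move=> hS; split=> [i|i|x y hx hy i|x y hx hy i|x hx nx i].
- by case: (hS i).
- by case: (hS i).
- by case: (hS i) => _ _ + _ _; apply.
- by case: (hS i) => _ _ _ + _; apply.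
- by case: (hS i) => _ _ _ _; apply.
Qed.

Lemma division_subring_commutant (y : D) :
  division_subring (fun x => x * y = y * x).
Proof.
split=> [||u v hu hv|u v hu hv|u hu nu].
- by rewrite mul0r mulr0.
- by rewrite mul1r mulr1.
- by rewrite mulrBl mulrBr hu hv.
- by rewrite -mulrA hv !mulrA hu.
- have uu : u \is a GRing.unit by rewrite unitdE.
  by apply: (mulrI uu); rewrite mulrA divrr // mul1r mulrA hu -mulrA divrr ?mulr1.
Qed.

Lemma center_division_subring : division_subring (@center D).
Proof.
exact: (@division_subring_bigcap D (fun y x => x * y = y * x) division_subring_commutant).
Qed.

Lemma center1 : center (1 : D).
Proof. by case: center_division_subring => _ + _ _ _. Qed.

Lemma centerB (x y : D) : center x -> center y -> center (x - y).
Proof. by case: center_division_subring => _ _ + _ _; apply. Qed.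

Lemma centerM (x y : D) : center x -> center y -> center (x * y).
Proof. by case: center_division_subring => _ _ _ + _; apply. Qed.

Lemma centerV (x : D) : center x -> x != 0 -> center x^-1.
Proof. by case: center_division_subring => _ _ _ _; apply. Qed.

Lemma centerN1 : center (-1 : D).
Proof. by move=> y; rewrite mulN1r mulrN1. Qed.

Lemma central_linear_eq (u v x : D) : center u -> center v -> u * x = v ->
  center x \/ u = 0 /\ v = 0.
Proof.
move=> hu hv e; have [u0|nu] := eqVneq u 0.
  by right; split=> //; rewrite -e u0 mul0r.
left; have -> : x = u^-1 * v by rewrite -e mulKr ?unitdE.
by apply: centerM => //; apply: centerV.
Qed.

Lemma noncentral_add1_neq0 (x : D) : ~ center x -> 1 + x != 0.
Proof.
move=> nx; apply/eqP => x1; apply: nx.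
suff -> : x = -1 by exact: centerN1.
by apply/eqP; rewrite -subr_eq0 opprK addrC x1.
Qed.

Lemma mulr_commr (x y : D) : x \is a GRing.unit -> y \is a GRing.unit ->
  center (commr x y) -> x * y = commr x y * (y * x).
Proof.
by move=> ux uy hc; rewrite hc /commr !mulrA (mulrK ux) (mulrV uy) mul1r.
Qed.

(* The preimage in D^* of the centralizer of aF^* in D^*/F^*. *)
Definition Fcentralizer (a d : D) : Prop :=
  d != 0 /\ exists2 c, center c & a * d = c * (d * a).

Lemma Fcentralizer_subgroup (a : D) : a \is a GRing.unit -> subgroup (Fcentralizer a).
Proof.
move=> ua; split=> [x [] //||x y [nx [c hc ex]] [ny [c' hc' ey]]|x [nx [c hc ex]]].
- split; first exact: oner_neq0.
  by exists 1; [exact: center1 | rewrite mulr1 !mul1r].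
- split; first by rewrite -unitdE unitrMl ?unitdE.
  exists (c * c'); first exact: centerM.
  by rewrite mulrA ex -!mulrA ey [x * (c' * _)]mulrA -[x * c']hc' !mulrA.
- have ux : x \is a GRing.unit by rewrite unitdE.
  have uc : c \is a GRing.unit.
    have : a * x \is a GRing.unit by rewrite unitrMr.
    by rewrite ex; apply: contraTT; rewrite unitdE negbK => /eqP ->; rewrite mul0r unitr0.
  split; first by rewrite invr_eq0.
  exists c^-1; first by apply: centerV; rewrite -?unitdE.
  apply: (mulrI uc); rewrite mulVKr //.
  apply: (mulrI ux); rewrite mulVKr // mulrA -(hc x) -mulrA.
  by rewrite [x * (a / x)]mulrA mulrA -ex mulrK.
Qed.

Lemma Fcentralizer_add1 (a : D) : ~ center a -> Fcentralizer a (1 + a).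
Proof.
move=> na; split; first exact: noncentral_add1_neq0.
by exists 1; [exact: center1 | rewrite mul1r mulrDr mulrDl mulr1 mul1r].
Qed.

Lemma Fcentralizer_add1_notin (a b k : D) : a != 0 -> center k -> k != 1 ->
  ~ center b -> a * b = k * (b * a) -> ~ Fcentralizer a (1 + b).
Proof.
move=> na hk k1 nb eab [_ [mu hmu emu]].
rewrite mulrDr mulr1 eab mulrDl mul1r mulrDr in emu.
have e : (k - mu) * b = mu - 1.
  apply: (mulIr (_ : a \is a GRing.unit)); first by rewrite unitdE.
  by rewrite !mulrBl mul1r -!mulrA (addr_eq_sub emu).
have [//|[k_mu mu1]] := central_linear_eq (centerB hk hmu) (centerB hmu center1) e.
by move: k1; rewrite (subr0_eq k_mu) (subr0_eq mu1) eqxx.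
Qed.

Lemma center_of_commr_add1 (a b k k' : D) : b != 0 -> center k -> center k' ->
  k != 1 -> a * b = k * (b * a) -> b * (1 + a) = k' * ((1 + a) * b) -> center a.
Proof.
move=> nb hk hk' k1 eab eba.
rewrite mulrDr mulr1 mulrDl mul1r mulrDr eab in eba.
have c1 : center (1 - k' * k) by apply: centerB; [exact: center1 | exact: centerM].
have c2 : center (k' - 1) by apply: centerB => //; exact: center1.
have e : (1 - k' * k) * a = k' - 1.
  apply: (mulrI (_ : b \is a GRing.unit)); first by rewrite unitdE.
  rewrite mulrA -c1 -mulrA -c2 !mulrBl !mul1r -mulrA.
  exact: addr_eq_sub eba.
have [//|[kk k'1]] := central_linear_eq c1 c2 e.
by move: kk k1; rewrite (subr0_eq k'1) mul1r => /subr0_eq <-; rewrite eqxx.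
Qed.

Lemma maximal_central_commr_abelian (M : D -> Prop) : maximal_subgroup M ->
    (forall x y, M x -> M y -> center (commr x y)) ->
  forall a b, M a -> M b -> a * b = b * a.
Proof.
case=> [[hM0 _ _ _] _ hmaxM] hcomm a b Ma Mb.
have unitM m : M m -> m \is a GRing.unit by rewrite unitdE; exact: hM0.
have commM x y : M x -> M y -> x * y = commr x y * (y * x).
  by move=> Mx My; apply: mulr_commr; [exact: unitM | exact: unitM | exact: hcomm].
apply/eqP; apply/negPn/negP => nab.
have k1 : commr a b != 1 by apply: contra nab; rewrite {1}commM // => /eqP ->; rewrite mul1r.
have na : ~ center a by move=> ca; rewrite ca eqxx in nab.
have nb : ~ center b by move=> cb; rewrite cb eqxx in nab.
have M_Fa m : M m -> Fcentralizer a m.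
  by move=> Mm; split; [exact: hM0 | exists (commr a m); [exact: hcomm | exact: commM]].
have Fa_proper : exists x, x != 0 /\ ~ Fcentralizer a x.
  exists (1 + b); split; first exact: noncentral_add1_neq0.
  by apply: Fcentralizer_add1_notin k1 nb (commM _ _ Ma Mb); [exact: hM0 | exact: hcomm].
have Ma1 : M (1 + a).
  exact: hmaxM (Fcentralizer_subgroup (unitM _ Ma)) M_Fa Fa_proper _ (Fcentralizer_add1 na).
apply: na; apply: (center_of_commr_add1 (hM0 _ Mb) (hcomm _ _ Ma Mb) (hcomm _ _ Mb Ma1) k1).
- exact: commM.
- exact: commM.
Qed.

Lemma irreducible_abelian_commutative (G : D -> Prop) : irreducible_grp G ->
  (forall a b, G a -> G b -> a * b = b * a) -> forall x y : D, x * y = y * x.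
Proof.
move=> hirr hab.
have G_center m : G m -> center m.
  move=> Gm x; apply/esym; apply: (hirr x _ (division_subring_commutant m)).
  - by move=> c; apply.
  - by move=> c Gc; apply: hab.
by move=> x; apply: (hirr x _ center_division_subring).
Qed.

End DivisionRing.

Lemma derived_commr (D : unitRingType) (H : D -> Prop) (x y : D) :
  H x -> H y -> derived H (commr x y).
Proof. by move=> Hx Hy K _; apply; exists x, y. Qed.

Theorem lemma2p6 (D : unitRingType) (hD : division_ring D)
  (hnc : exists x y : D, x * y != y * x)
  (M : D -> Prop) (hmax : maximal_subgroup M) (hirr : irreducible_grp M)
  (hls : locally_solvable M) :
  ~ (forall x : D, derived M x -> center x).
Proof.
move=> hderF; case: hnc => x [y]; apply/negP; rewrite negbK; apply/eqP.
apply: (irreducible_abelian_commutative hD hirr).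
apply: (maximal_central_commr_abelian hD hmax) => a b Ma Mb.
exact: hderF (derived_commr Ma Mb).
Qed.
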